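(* Let $I=[a,b]$ be a compact interval, $r\ge1$ an integer, $g\in C^r(I,\mathbb R)$ with $\|g'\|_{L^\infty(I)}\le1$, put $C_r:=\|g^{(r)}\|_{L^\infty(I)}$, and let $C>0$. Then for every $\lambda$ with $0<\lambda\le\|g\|_\infty$ and $C\lambda\le|I|$ there is a finite family of pairwise disjoint open (relative to $I$) intervals $I_{\lambda,i}$, $i\in\mathcal I_\lambda$, each of length $|I_{\lambda,i}|\ge C\lambda$, such that: (i) $|\mathcal I_\lambda|\le 30r\big(1+|I|\,C_r^{1/r}\lambda^{-1/r}\big)$; (ii) with $V_\lambda:=\bigcup_{i\in\mathcal I_\lambda}I_{\lambda,i}$, we have $\{t\in I:|g(t)|<\lambda\}\subset V_\lambda\subset\{t\in I:|g(t)|<(8+C)\lambda\}$.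
   Context: $\|g\|_\infty$ denotes the supremum of $|g|$ over $I$, and $|I|=b-a$. *)

From Stdlib Require Import Reals.
Open Scope R_scope.

(* x^y for x >= 0, y real, with the convention 0^y = 0 for y <> 0, 0^0 = 1
   (Stdlib's Rpower 0 y would be exp 0 = 1, which is wrong). *)
Definition rpow (x y : R) : R :=
  if Req_EM_T x 0 then (if Req_EM_T y 0 then 1 else 0) else Rpower x y.

Definition cont_within (a b : R) (f : R -> R) (x : R) : Prop :=
  forall eps, 0 < eps -> exists delta, 0 < delta /\
    forall y, a <= y <= b -> Rabs (y - x) < delta -> Rabs (f y - f x) < eps.

Definition Cr_on (r : nat) (a b : R) (g : R -> R) (D : nat -> R -> R) : Prop :=
  (forall x, a <= x <= b -> D 0%nat x = g x) /\
  (forall k, (k <= r)%nat -> forall x, a <= x <= b -> cont_within a b (D k) x) /\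
  (forall k, (k < r)%nat -> forall x, a < x < b ->
      derivable_pt_lim (D k) x (D (S k) x)).

Definition is_supnorm (a b : R) (f : R -> R) (s : R) : Prop :=
  is_lub (fun y => exists t, a <= t <= b /\ y = Rabs (f t)) s.

(* A relatively open subinterval of [a,b], described by endpoints l < u in
   [a,b] and flags saying whether the endpoint a (resp. b) is included:
   J = (l,u), [a,u), (l,b] or [a,b]. *)
Definition rel_interval (a b l u : R) (cl cr : bool) (t : R) : Prop :=
  a <= t <= b /\ (l < t \/ (cl = true /\ t = l)) /\ (t < u \/ (cr = true /\ t = u)).

Definition rel_open_ok (a b l u : R) (cl cr : bool) : Prop :=
  a <= l < u /\ u <= b /\ (cl = true -> l = a) /\ (cr = true -> u = b).

From Stdlib Require Import Reals Lra Lia Arith Classical IndefiniteDescription.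
From Coquelicot Require Import Coquelicot.
From Stdlib Require Import List Sorted.
Import ListNotations.
Open Scope R_scope.

(* Cut I into N cells of mesh at most lam.  A cell is low if
   |g| < lam somewhere on it, safe if |g| < (2 + C) lam on all of it, and
   linked if a chain of safe cells joins it to a low cell.  The intervals are
   the maximal runs of consecutive linked cells.  As g is 1-Lipschitz, low
   cells are safe and every run extends C lam beyond each of its low points
   unless it reaches an endpoint of I; this gives the length bound, the cover
   of {|g| < lam} and the bound |g| < (2 + C) lam <= (8 + C) lam on the runs.

   Between consecutive runs lies a point where |g| >= 2 lam, so m
   runs yield a zigzag of low and high points along which g - 3lam/2 and
   g + 3lam/2 change sign 2 (m - 1) times, staying lam/2 away from 0.  By
   iterated mean value arguments, r sign changes of such a function force
   |f^(r)| h^r >= lam/2 on any window of length h containing them; for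
   Cr h^r < lam/2 this bounds the sign changes window by window, and the
   choice h = 1 / (15 Cr^(1/r) lam^(-1/r)) gives the estimate (i). *)

Definition clamp (a b z : R) : R := Rmax a (Rmin b z).

Lemma clamp_id (a b z : R) : a <= z <= b -> clamp a b z = z.
Proof. intros. unfold clamp, Rmax, Rmin. repeat destruct Rle_dec; lra. Qed.

Lemma clamp_in (a b z : R) : a <= b -> a <= clamp a b z <= b.
Proof. intros. unfold clamp, Rmax, Rmin. repeat destruct Rle_dec; lra. Qed.

Lemma clamp_contract (a b z w : R) : a <= w <= b -> Rabs (clamp a b z - w) <= Rabs (z - w).
Proof.
  intros. unfold clamp, Rmax, Rmin.
  repeat destruct Rle_dec; unfold Rabs; repeat destruct Rcase_abs; lra.
Qed.

(* Mean value theorem for a function differentiable on (a,b) and continuous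
   relative to [a,b]: apply Coquelicot's MVT to f composed with the clamp. *)
Lemma mvt_within (a b : R) (f f' : R -> R) :
  (forall x, a < x < b -> derivable_pt_lim f x (f' x)) ->
  (forall x, a <= x <= b -> cont_within a b f x) ->
  forall x y, a <= x -> x < y -> y <= b ->
  exists c, x <= c <= y /\ f y - f x = f' c * (y - x).
Proof.
  intros Hd Hc x y Hax Hxy Hyb.
  set (fe := fun z => f (clamp a b z)).
  destruct (MVT_gen fe x y f') as [c [Hc1 Hc2]].
  - intros z Hz. rewrite Rmin_left, Rmax_right in Hz by lra.
    apply is_derive_ext_loc with f.
    + assert (Hp : 0 < Rmin (z - a) (b - z)) by (apply Rmin_pos; lra).
      exists (mkposreal _ Hp). intros t Ht.
      cbn in Ht; unfold AbsRing_ball, abs, minus, plus, opp in Ht; cbn in Ht.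
      pose proof (Rmin_l (z - a) (b - z)). pose proof (Rmin_r (z - a) (b - z)).
      unfold fe. rewrite clamp_id; auto.
      unfold Rabs in Ht; destruct Rcase_abs in Ht; lra.
    + apply is_derive_Reals, Hd. lra.
  - intros z Hz. rewrite Rmin_left, Rmax_right in Hz by lra.
    intros eps Heps. destruct (Hc z ltac:(lra) eps Heps) as [d [Hd0 Hd1]].
    exists d. split; auto. intros t [_ Ht]. cbn in *. unfold R_dist in *.
    unfold fe. rewrite (clamp_id a b z) by lra.
    apply Hd1; [apply clamp_in; lra|].
    eapply Rle_lt_trans; [apply clamp_contract; lra|auto].
  - rewrite Rmin_left, Rmax_right in Hc1 by lra.
    exists c. split; auto. unfold fe in Hc2. rewrite !clamp_id in Hc2 by lra. auto.
Qed.

Lemma Cr_lipschitz (a b : R) (r : nat) (g : R -> R) (D : nat -> R -> R) :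
  (1 <= r)%nat -> Cr_on r a b g D ->
  (forall t, a <= t <= b -> Rabs (D 1%nat t) <= 1) ->
  forall x y, a <= x <= b -> a <= y <= b -> Rabs (g x - g y) <= Rabs (x - y).
Proof.
  intros Hr [H0 [H1 H2]] HD.
  assert (Hlt : forall x y, a <= x <= b -> a <= y <= b -> x < y ->
            Rabs (g x - g y) <= Rabs (x - y)).
  { intros x y Hx Hy Hxy.
    destruct (mvt_within a b (D 0%nat) (D 1%nat)) with (x := x) (y := y)
      as [c [Hc Heq]]; try lra.
    - intros; apply H2; auto; lia.
    - intros; apply H1; auto; lia.
    - rewrite <- (H0 x Hx), <- (H0 y Hy), <- Rabs_Ropp, Ropp_minus_distr, Heq,
        Rabs_mult, (Rabs_minus_sym x y).
      assert (Rabs (D 1%nat c) <= 1) by (apply HD; lra).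
      pose proof (Rabs_pos (y - x)). nra. }
  intros x y Hx Hy. destruct (Rtotal_order x y) as [Hxy|[->|Hxy]].
  - auto.
  - rewrite !Rminus_diag, Rabs_R0. lra.
  - rewrite (Rabs_minus_sym (g x)), (Rabs_minus_sym x). auto.
Qed.
Definition is_pos (f : R -> R) (x : R) : bool := if Rlt_dec 0 (f x) then true else false.

Definition sign_flip (f : R -> R) (x y : R) : nat :=
  if Bool.eqb (is_pos f x) (is_pos f y) then 0%nat else 1%nat.

Fixpoint sign_changes (f : R -> R) (l : list R) : nat :=
  match l with
  | x :: ((y :: _) as t) => (sign_flip f x y + sign_changes f t)%nat
  | _ => 0%nat
  end.

Definition deriv_chain (a b : R) (F : nat -> R -> R) (k : nat) : Prop :=
  (forall j, (j < k)%nat -> forall x, a < x < b -> derivable_pt_lim (F j) x (F (S j) x)) /\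
  (forall j, (j < k)%nat -> forall x, a <= x <= b -> cont_within a b (F j) x).

Lemma deriv_chain_le (a b : R) (F : nat -> R -> R) (k k' : nat) :
  (k' <= k)%nat -> deriv_chain a b F k -> deriv_chain a b F k'.
Proof. intros Hk [H1 H2]; split; intros j Hj; [apply H1|apply H2]; lia. Qed.

Lemma deriv_chain_shift (a b : R) (F : nat -> R -> R) (k : nat) :
  deriv_chain a b F (S k) -> deriv_chain a b (fun j => F (S j)) k.
Proof. intros [H1 H2]; split; intros j Hj; [apply (H1 (S j))|apply (H2 (S j))]; lia. Qed.

Lemma sign_change_slope (a b mu y z : R) (F : nat -> R -> R) :
  deriv_chain a b F 1 -> a <= y -> y < z -> z <= b ->
  mu <= Rabs (F 0%nat y) -> mu <= Rabs (F 0%nat z) ->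
  is_pos (F 0%nat) y <> is_pos (F 0%nat) z ->
  exists w, y <= w <= z /\ is_pos (F 1%nat) w = is_pos (F 0%nat) z /\
    2 * mu <= Rabs (F 1%nat w) * (z - y).
Proof.
  intros [Hd Hc] Hay Hyz Hzb Hy Hz Hflip.
  destruct (mvt_within a b (F 0%nat) (F 1%nat)) with (x := y) (y := z) as [w [Hw Heq]];
    try lra; try (intros; apply Hd || apply Hc; auto).
  exists w. split; [lra|]. unfold is_pos in *.
  destruct (Rlt_dec 0 (F 0%nat z)), (Rlt_dec 0 (F 0%nat y)); try congruence.
  - rewrite Rabs_right in Hz by lra. rewrite Rabs_left1 in Hy by lra.
    assert (Hpos : 0 < F 1%nat w) by nra.
    rewrite Rabs_right by lra. destruct Rlt_dec; [split; [auto|nra]|lra].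
  - rewrite Rabs_left1 in Hz by lra. rewrite Rabs_right in Hy by lra.
    assert (Hneg : F 1%nat w < 0) by nra.
    rewrite Rabs_left by lra. destruct Rlt_dec; [lra|split; [auto|nra]].
Qed.

Lemma sign_changes_derivative (a b c d mu : R) (F : nat -> R -> R) :
  deriv_chain a b F 1 -> a <= c -> d <= b ->
  forall l y, StronglySorted Rlt (y :: l) ->
  Forall (fun x => c <= x <= d) (y :: l) ->
  Forall (fun x => mu <= Rabs (F 0%nat x)) (y :: l) ->
  exists W, StronglySorted Rlt W /\ Forall (fun w => y <= w <= d) W /\
    Forall (fun w => mu <= Rabs (F 1%nat w) * (d - c)) W /\
    length W = sign_changes (F 0%nat) (y :: l) /\
    sign_changes (F 1%nat) W = pred (length W) /\
    (forall w W', W = w :: W' -> is_pos (F 1%nat) w = negb (is_pos (F 0%nat) y)).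
Proof.
  intros Hch Hac Hdb. induction l as [|z l IH]; intros y Hs Hin Hmu.
  { exists []. repeat split; auto; try constructor; discriminate. }
  apply StronglySorted_inv in Hs as [Hs Hyl].
  inversion Hyl as [|? ? Hyz _]; inversion Hin as [|? ? Hy Hin']; inversion Hmu as [|? ? Hmy Hmu'];
    subst.
  pose proof (Forall_inv Hin') as Hz; pose proof (Forall_inv Hmu') as Hmz; cbn in Hz, Hmz.
  destruct (IH z Hs Hin' Hmu') as [W [HWs [HWin [HWmu [HWlen [HWalt HWhd]]]]]].
  change (sign_changes (F 0%nat) (y :: z :: l))
    with (sign_flip (F 0%nat) y z + sign_changes (F 0%nat) (z :: l))%nat.
  unfold sign_flip.
  destruct (Bool.eqb (is_pos (F 0%nat) y) (is_pos (F 0%nat) z)) eqn:E.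
  -
    apply Bool.eqb_prop in E.
    exists W. repeat split; auto.
    + eapply Forall_impl; [|exact HWin]. cbn; intros; lra.
    + intros w W' ->. rewrite E. eapply HWhd; eauto.
  - (* a sign change: prepend the mean value point w *)
    assert (Hflip : is_pos (F 0%nat) y <> is_pos (F 0%nat) z)
      by (intro H; rewrite H, Bool.eqb_reflx in E; discriminate).
    destruct (sign_change_slope a b mu y z F) as [w [Hw [Hsw Hmw]]]; auto; try lra.
    assert (Hw_head : forall v W', W = v :: W' -> w < v).
    { intros v W' ->. pose proof (Forall_inv HWin) as Hv; cbn in Hv.
      destruct (Req_dec w v) as [<-|]; [|lra].
      specialize (HWhd w W' eq_refl). rewrite Hsw in HWhd.
      destruct (is_pos (F 0%nat) z); discriminate. }
    exists (w :: W). split; [|split; [|split; [|split; [|split]]]].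
    + constructor; auto. destruct W as [|v W']; [constructor|].
      specialize (Hw_head v W' eq_refl).
      apply StronglySorted_inv in HWs as [_ HWs].
      constructor; [lra|]. eapply Forall_impl; [|exact HWs]. cbn; intros; lra.
    + constructor; [lra|]. eapply Forall_impl; [|exact HWin]. cbn; intros; lra.
    + constructor; auto.
      assert (Rabs (F 1%nat w) * (z - y) <= Rabs (F 1%nat w) * (d - c))
        by (apply Rmult_le_compat_l; [apply Rabs_pos|lra]).
      pose proof (Rabs_pos (F 1%nat w)). nra.
    + cbn. rewrite HWlen. reflexivity.
    + destruct W as [|v W']; [reflexivity|].
      change (sign_changes (F 1%nat) (w :: v :: W'))
        with (sign_flip (F 1%nat) w v + sign_changes (F 1%nat) (v :: W'))%nat.
      rewrite HWalt. unfold sign_flip. rewrite Hsw, (HWhd v W' eq_refl).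
      destruct (is_pos (F 0%nat) z); cbn; lia.
    + intros w0 W0 [= <- <-]. rewrite Hsw.
      destruct (is_pos (F 0%nat) y), (is_pos (F 0%nat) z); cbn; congruence.
Qed.

Lemma sign_changes_force_derivative (a b : R) : forall k F mu c d l,
  deriv_chain a b F k -> 0 < mu -> a <= c -> d <= b -> l <> [] ->
  StronglySorted Rlt l -> Forall (fun x => c <= x <= d) l ->
  Forall (fun x => mu <= Rabs (F 0%nat x)) l -> (k <= sign_changes (F 0%nat) l)%nat ->
  exists xi, a <= xi <= b /\ mu <= Rabs (F k xi) * (d - c) ^ k.
Proof.
  induction k as [|k IH]; intros F mu c d l Hch Hmu Hac Hdb Hl Hs Hin Hmul Hk;
    destruct l as [|y l]; try congruence.
  { exists y. pose proof (Forall_inv Hin). pose proof (Forall_inv Hmul). cbn in *. lra. }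
  destruct l as [|z l]; [cbn in Hk; lia|].
  assert (Hcd : c < d).
  { pose proof (Forall_inv Hin) as Hy. pose proof (Forall_inv (Forall_inv_tail Hin)) as Hz.
    pose proof (Forall_inv (proj2 (StronglySorted_inv Hs))) as Hyz. cbn in *. lra. }
  destruct (sign_changes_derivative a b c d mu F (deriv_chain_le a b F (S k) 1 ltac:(lia) Hch)
              Hac Hdb (z :: l) y Hs Hin Hmul) as [W [HWs [HWin [HWmu [HWlen [HWalt _]]]]]].
  destruct (IH (fun j => F (S j)) (mu / (d - c)) c d W) as [xi [Hxi Hbound]].
  - apply deriv_chain_shift; auto.
  - apply Rdiv_lt_0_compat; lra.
  - auto.
  - auto.
  - destruct W; [rewrite <- HWlen in Hk; cbn in Hk; lia|congruence].
  - auto.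
  - pose proof (Forall_inv Hin) as Hy; cbn in Hy.
    eapply Forall_impl; [|exact HWin]. cbn; intros; lra.
  - eapply Forall_impl; [|exact HWmu]. cbn; intros w Hw.
    apply (Rmult_le_reg_r (d - c)); [lra|]. unfold Rdiv.
    rewrite Rmult_assoc, Rinv_l by lra. lra.
  - cbv beta. rewrite HWalt, HWlen. lia.
  - exists xi. split; auto.
    replace mu with (mu / (d - c) * (d - c)) by (field; lra).
    replace (Rabs (F (S k) xi) * (d - c) ^ S k)
      with (Rabs (F (S k) xi) * (d - c) ^ k * (d - c)) by (cbn; ring).
    apply Rmult_le_compat_r; lra.
Qed.

Lemma StronglySorted_app_inv {A : Type} (Rel : A -> A -> Prop) (l1 l2 : list A) :
  StronglySorted Rel (l1 ++ l2) ->
  StronglySorted Rel l1 /\ StronglySorted Rel l2 /\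
  (forall x y, In x l1 -> In y l2 -> Rel x y).
Proof.
  induction l1 as [|x0 l1 IH]; cbn; intros Hs.
  - repeat split; [constructor|auto|contradiction].
  - apply StronglySorted_inv in Hs as [Hs Hx0]. rewrite Forall_forall in Hx0.
    destruct (IH Hs) as [Hs1 [Hs2 Hlt]]. repeat split; auto.
    + constructor; auto. rewrite Forall_forall. intros; apply Hx0, in_or_app; auto.
    + intros x y [<-|Hx] Hy; [apply Hx0, in_or_app|apply Hlt]; auto.
Qed.

Lemma split_sign_changes (f : R -> R) : forall L k, (k < sign_changes f L)%nat ->
  exists L1 L2, L = L1 ++ L2 /\ L1 <> [] /\ L2 <> [] /\
    (k <= sign_changes f L1)%nat /\ (sign_changes f L <= S (k + sign_changes f L2))%nat.
Proof.
  induction L as [|x L IH]; intros k Hk; [cbn in Hk; lia|].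
  destruct L as [|y L']; [cbn in Hk; lia|].
  change (sign_changes f (x :: y :: L'))
    with (sign_flip f x y + sign_changes f (y :: L'))%nat in *.
  assert (Hflip : (sign_flip f x y <= 1)%nat) by (unfold sign_flip; destruct Bool.eqb; lia).
  destruct k as [|k].
  { exists [x], (y :: L'). repeat split; try congruence; cbn; lia. }
  destruct (IH (k + 1 - sign_flip f x y)%nat) as [L1 [L2 [E [N1 [N2 [S1 S2]]]]]]; [lia|].
  destruct L1 as [|y' L1]; [congruence|]. injection E as <- E.
  exists (x :: y :: L1), L2. repeat split; try congruence.
  - cbn. rewrite E. reflexivity.
  - change (sign_changes f (x :: y :: L1))
      with (sign_flip f x y + sign_changes f (y :: L1))%nat. lia.
  - lia.
Qed.

(* If |F r| <= Cr on [a,b] and Cr h^r < mu, then any r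
   sign changes of F 0 at points where |F 0| >= mu are spread over more than
   length h; hence along sorted points of [c,b] the number of sign changes
   is at most (r + 1) (b - c) / h + r. *)
Lemma sign_changes_bound (a b Cr mu h : R) (r : nat) (F : nat -> R -> R) :
  deriv_chain a b F r -> (forall x, a <= x <= b -> Rabs (F r x) <= Cr) ->
  0 < mu -> 0 < h -> Cr * h ^ r < mu ->
  forall L c, a <= c <= b -> StronglySorted Rlt L ->
  Forall (fun x => c <= x <= b) L -> Forall (fun x => mu <= Rabs (F 0%nat x)) L ->
  INR (sign_changes (F 0%nat) L) * h <= INR (S r) * (b - c) + INR r * h.
Proof.
  intros Hch HCr Hmu Hh Hhr L.
  induction L as [L IH] using (induction_ltof1 _ (@length R)); unfold ltof in IH.
  intros c Hc Hs Hin Hmul.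
  assert (Hrh : 0 <= INR r * h) by (apply Rmult_le_pos; [apply pos_INR|lra]).
  destruct (Compare_dec.le_lt_dec (sign_changes (F 0%nat) L) r) as [Hle|Hlt].
  { apply le_INR in Hle.
    assert (INR (sign_changes (F 0%nat) L) * h <= INR r * h) by (apply Rmult_le_compat_r; lra).
    assert (0 <= INR (S r) * (b - c)) by (apply Rmult_le_pos; [apply pos_INR|lra]). lra. }
  destruct (split_sign_changes (F 0%nat) L r Hlt) as [L1 [L2 [-> [N1 [N2 [S1 S2]]]]]].
  destruct L2 as [|z L2]; [congruence|].
  apply StronglySorted_app_inv in Hs as Hsplit. destruct Hsplit as [Hs1 [Hs2 Hlt12]].
  rewrite Forall_app in Hin, Hmul. destruct Hin as [Hin1 Hin2], Hmul as [Hmu1 Hmu2].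
  pose proof (Forall_inv Hin2) as Hz; cbn in Hz.
  (* the first r sign changes happen in [c, z], so z - c >= h *)
  assert (Hwindow : h <= z - c).
  { destruct (Rle_dec h (z - c)) as [|Hn]; auto. exfalso.
    destruct (sign_changes_force_derivative a b r F mu c z L1) as [xi [Hxi Hbig]]; auto; try lra.
    { rewrite Forall_forall in *. intros x Hx.
      split; [apply Hin1; auto|apply Rlt_le, Hlt12; cbn; auto]. }
    assert (Rabs (F r xi) * (z - c) ^ r <= Cr * h ^ r).
    { apply Rmult_le_compat; [apply Rabs_pos|apply pow_le; lra|apply HCr; auto|].
      apply pow_incr. lra. }
    lra. }
  assert (Hrest : INR (sign_changes (F 0%nat) (z :: L2)) * h <= INR (S r) * (b - z) + INR r * h).
  { apply IH; auto; [|lra|].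
    - rewrite length_app. destruct L1; [congruence|cbn; lia].
    - constructor; [lra|]. apply StronglySorted_inv in Hs2 as [_ Hzl].
      apply Forall_inv_tail in Hin2. rewrite Forall_forall in *.
      intros x Hx. specialize (Hzl x Hx). specialize (Hin2 x Hx). lra. }
  apply le_INR in S2. rewrite S_INR, plus_INR in S2. rewrite S_INR in *.
  assert (INR (sign_changes (F 0%nat) (L1 ++ z :: L2)) * h
          <= (INR r + INR (sign_changes (F 0%nat) (z :: L2)) + 1) * h)
    by (apply Rmult_le_compat_r; lra).
  assert (INR r * h <= INR r * (z - c)) by (apply Rmult_le_compat_l; [apply pos_INR|lra]).
  lra.
Qed.

Fixpoint zigzag (s t : nat -> R) (k i : nat) : list R :=
  match k with
  | O => [s i]
  | S k' => s i :: t i :: zigzag s t k' (S i)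
  end.

Lemma zigzag_Forall (P : R -> Prop) (s t : nat -> R) : forall k i,
  (forall j, (i <= j <= i + k)%nat -> P (s j)) -> (forall j, (i <= j < i + k)%nat -> P (t j)) ->
  Forall P (zigzag s t k i).
Proof.
  induction k as [|k IH]; intros i Hs Ht; cbn.
  - constructor; [apply Hs; lia|constructor].
  - constructor; [apply Hs; lia|]. constructor; [apply Ht; lia|].
    apply IH; intros; [apply Hs|apply Ht]; lia.
Qed.

Lemma zigzag_sorted (s t : nat -> R) (b : R) : forall k i,
  (forall j, (i <= j <= i + k)%nat -> s j <= b) ->
  (forall j, (i <= j < i + k)%nat -> s j < t j < s (S j)) ->
  StronglySorted Rlt (zigzag s t k i) /\ Forall (fun x => s i <= x <= b) (zigzag s t k i).
Proof.
  induction k as [|k IH]; intros i Hs Hst; cbn.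
  - split; [repeat constructor|]. constructor; [specialize (Hs i ltac:(lia)); lra|constructor].
  - destruct (IH (S i)) as [Hsort Hin]; [intros; apply Hs; lia|intros; apply Hst; lia|].
    destruct (Hst i ltac:(lia)) as [Hst1 Hst2].
    pose proof (Hs (S i) ltac:(lia)). specialize (Hs i ltac:(lia)).
    assert (Hts : forall x, In x (zigzag s t k (S i)) -> t i < x).
    { rewrite Forall_forall in Hin. intros x Hx. specialize (Hin x Hx). lra. }
    split.
    + constructor; [constructor; auto|].
      * rewrite Forall_forall. auto.
      * constructor; [lra|]. rewrite Forall_forall. intros x Hx. specialize (Hts x Hx). lra.
    + constructor; [lra|]. constructor; [lra|].
      eapply Forall_impl; [|exact Hin]. cbn; intros; lra.
Qed.

Definition shift0 (D : nat -> R -> R) (c : R) : nat -> R -> R :=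
  fun j => match j with O => fun x => D O x - c | S j' => D (S j') end.

Lemma Cr_deriv_chain (a b c : R) (r : nat) (g : R -> R) (D : nat -> R -> R) :
  Cr_on r a b g D -> deriv_chain a b (shift0 D c) r.
Proof.
  intros [_ [Hcont Hder]]. split; intros [|j] Hj x Hx; cbn.
  - rewrite <- Rminus_0_r. apply derivable_pt_lim_minus;
      [apply Hder; auto|apply derivable_pt_lim_const].
  - apply Hder; auto.
  - intros eps Heps. destruct (Hcont 0%nat ltac:(lia) x Hx eps Heps) as [d [Hd Hclose]].
    exists d. split; auto. intros y Hy Hyx.
    replace (D 0%nat y - c - (D 0%nat x - c)) with (D 0%nat y - D 0%nat x) by ring. auto.
  - apply Hcont; auto. lia.
Qed.

Lemma sign_flip_sym (f : R -> R) (x y : R) : sign_flip f x y = sign_flip f y x.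
Proof. unfold sign_flip. destruct (is_pos f x), (is_pos f y); reflexivity. Qed.

Lemma low_high_flip (f : R -> R) (lam x y : R) :
  Rabs (f x) < lam -> 2 * lam <= Rabs (f y) ->
  (sign_flip (fun z => f z - 3/2 * lam)%R x y
   + sign_flip (fun z => f z - - (3/2 * lam))%R x y)%nat = 1%nat.
Proof.
  intros Hx Hy. unfold sign_flip, is_pos.
  unfold Rabs in *. repeat destruct Rcase_abs; repeat destruct Rlt_dec; cbn; lra || lia.
Qed.

Lemma zigzag_flips (f : R -> R) (lam : R) (s t : nat -> R) : forall k i,
  (forall j, (i <= j <= i + k)%nat -> Rabs (f (s j)) < lam) ->
  (forall j, (i <= j < i + k)%nat -> 2 * lam <= Rabs (f (t j))) ->
  (sign_changes (fun z => f z - 3/2 * lam)%R (zigzag s t k i)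
   + sign_changes (fun z => f z - - (3/2 * lam))%R (zigzag s t k i))%nat = (2 * k)%nat.
Proof.
  induction k as [|k IH]; intros i Hs Ht; [reflexivity|].
  specialize (IH (S i) ltac:(intros; apply Hs; lia) ltac:(intros; apply Ht; lia)).
  assert (Hhead : exists tl, zigzag s t k (S i) = s (S i) :: tl) by (destruct k; cbn; eauto).
  destruct Hhead as [tl Htl].
  change (zigzag s t (S k) i) with (s i :: t i :: zigzag s t k (S i)). rewrite Htl in *.
  cbn [sign_changes] in *.
  pose proof (low_high_flip f lam (s i) (t i) ltac:(apply Hs; lia) ltac:(apply Ht; lia)).
  pose proof (low_high_flip f lam (s (S i)) (t i) ltac:(apply Hs; lia) ltac:(apply Ht; lia)).
  rewrite !(sign_flip_sym _ (t i) (s (S i))). lia.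
Qed.

(* If s 0 < t 0 < s 1 < ... <
   s (m-1) lie in [a,b] with |D 0| < lam at the s i and |D 0| >= 2 lam at
   the t i, then both f = D 0 -+ 3 lam/2 stay lam/2 away from 0 at these
   points, and their 2 (m - 1) sign changes are bounded window by window. *)
Lemma zigzag_count (a b Cr lam h : R) (r m : nat) (g : R -> R) (D : nat -> R -> R)
  (s t : nat -> R) :
  Cr_on r a b g D -> (1 <= r)%nat -> (1 <= m)%nat ->
  (forall x, a <= x <= b -> Rabs (D r x) <= Cr) ->
  (forall i, (i < m)%nat -> a <= s i <= b /\ Rabs (D 0%nat (s i)) < lam) ->
  (forall i, (S i < m)%nat -> s i < t i < s (S i) /\ 2 * lam <= Rabs (D 0%nat (t i))) ->
  0 < lam -> 0 < h -> Cr * h ^ r < lam / 2 ->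
  INR (m - 1) * h <= INR (S r) * (b - a) + INR r * h.
Proof.
  intros HCr Hr Hm HDr Hs Ht Hlam Hh Hhr.
  set (Z := zigzag s t (m - 1) 0).
  destruct (zigzag_sorted s t b (m - 1) 0) as [Hsort Hin];
    [intros j Hj; apply Hs; lia|intros j Hj; apply Ht; lia|].
  assert (Hflips := zigzag_flips (D 0%nat) lam s t (m - 1) 0
           ltac:(intros j Hj; apply Hs; lia) ltac:(intros j Hj; apply Ht; lia)).
  assert (Hwindow : forall c, c = 3/2 * lam \/ c = - (3/2 * lam) ->
    INR (sign_changes (shift0 D c 0%nat) Z) * h <= INR (S r) * (b - a) + INR r * h).
  { intros c Hc.
    assert (Ha : a <= s 0%nat) by (apply Hs; lia).
    assert (B := sign_changes_bound a b Cr (lam / 2) h r (shift0 D c)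
                   (Cr_deriv_chain a b c r g D HCr)).
    specialize (B ltac:(destruct r; [lia|exact HDr]) ltac:(lra) Hh Hhr Z (s 0%nat)).
    assert (INR (S r) * (b - s 0%nat) <= INR (S r) * (b - a))
      by (apply Rmult_le_compat_l; [apply pos_INR|lra]).
    enough (INR (sign_changes (shift0 D c 0%nat) Z) * h
            <= INR (S r) * (b - s 0%nat) + INR r * h) by lra.
    apply B; auto.
    - specialize (Hs 0%nat ltac:(lia)). lra.
    - apply zigzag_Forall; intros j Hj; cbn.
      + destruct (Hs j ltac:(lia)) as [_ Hlow].
        unfold Rabs in *; repeat destruct Rcase_abs; lra.
      + destruct (Ht j ltac:(lia)) as [_ Hhigh].
        unfold Rabs in *; repeat destruct Rcase_abs; lra. }
  pose proof (Hwindow _ (or_introl eq_refl)) as Hminus.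
  pose proof (Hwindow _ (or_intror eq_refl)) as Hplus.
  cbn [shift0] in Hminus, Hplus.
  apply (f_equal INR) in Hflips. rewrite plus_INR, mult_INR in Hflips.
  replace (INR 2) with 2 in Hflips by reflexivity.
  assert (Hsum : INR (sign_changes (fun z => D 0%nat z - 3/2 * lam) Z) * h
                 + INR (sign_changes (fun z => D 0%nat z - - (3/2 * lam)) Z) * h
                 = 2 * (INR (m - 1) * h)).
  { rewrite <- Rmult_plus_distr_r. unfold Z. rewrite Hflips. ring. }
  assert (0 <= INR r * h) by (apply Rmult_le_pos; [apply pos_INR|lra]).
  lra.
Qed.

Lemma rpow_nonneg (x y : R) : 0 <= rpow x y.
Proof.
  unfold rpow. destruct Req_EM_T; [destruct Req_EM_T; lra|]. left; apply exp_pos.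
Qed.

Lemma rpow_pow (x y : R) (n : nat) : 0 < x -> rpow x y ^ n = Rpower x (y * INR n).
Proof.
  intros Hx. unfold rpow. destruct Req_EM_T; [lra|].
  rewrite <- Rpower_pow by apply exp_pos. apply Rpower_mult.
Qed.

(* If every admissible window length h (one with
   Cr h^r < lam/2) gives (m - 1) h <= (r + 1) L + r h, then m obeys the bound
   of the theorem; take h = 1 / (15 Cr^(1/r) lam^(-1/r)), or h large if Cr = 0. *)
Lemma count_estimate (r m : nat) (Cr lam L : R) :
  (1 <= r)%nat -> 0 <= Cr -> 0 < lam -> 0 < L ->
  (forall h, 0 < h -> Cr * h ^ r < lam / 2 -> INR (m - 1) * h <= INR (S r) * L + INR r * h) ->
  INR m <= 30 * INR r * (1 + L * rpow Cr (/ INR r) * rpow lam (- / INR r)).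
Proof.
  intros Hr HCr Hlam HL Hwin.
  assert (Hr1 : 1 <= INR r) by (apply (le_INR 1); auto).
  assert (HP0 : 0 <= L * rpow Cr (/ INR r) * rpow lam (- / INR r))
    by (pose proof (rpow_nonneg Cr (/ INR r)); pose proof (rpow_nonneg lam (- / INR r));
        apply Rmult_le_pos; [apply Rmult_le_pos|]; lra).
  destruct m as [|m]; [cbn; nra|].
  replace (S m - 1)%nat with m in Hwin by lia. rewrite S_INR in *.
  destruct (Req_dec Cr 0) as [->|HC0].
  - (* Cr = 0: one huge window shows m <= r + 1 *)
    set (h := (INR r + 1) * L + 1).
    assert (Hh : 0 < h) by (unfold h; nra).
    specialize (Hwin h Hh ltac:(lra)).
    assert (INR m < INR r + 1).
    { destruct (Rlt_dec (INR m) (INR r + 1)) as [|Hn]; auto.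
      assert ((INR r + 1) * h <= INR m * h) by (apply Rmult_le_compat_r; lra).
      unfold h in *. nra. }
    nra.
  -
    set (P := rpow Cr (/ INR r) * rpow lam (- / INR r)).
    assert (HPr : P ^ r = Cr / lam).
    { unfold P. rewrite Rpow_mult_distr, !rpow_pow by lra.
      replace (/ INR r * INR r) with 1 by (field; lra).
      replace (- / INR r * INR r) with (Ropp 1) by (field; lra).
      rewrite Rpower_Ropp, !Rpower_1 by lra. unfold Rdiv. ring. }
    assert (HP : 0 < P).
    { pose proof (rpow_nonneg Cr (/ INR r)). pose proof (rpow_nonneg lam (- / INR r)).
      destruct (Req_dec P 0) as [HP|HP]; [|unfold P in *; nra].
      rewrite HP, pow_i in HPr by lia.
      assert (Cr / lam > 0) by (apply Rdiv_lt_0_compat; lra). lra. }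
    set (h := / (15 * P)).
    assert (Hh : 0 < h) by (unfold h; apply Rinv_0_lt_compat; lra).
    assert (H15 : 15 <= 15 ^ r).
    { destruct r as [|r]; [lia|]. cbn. pose proof (pow_R1_Rle 15 r ltac:(lra)). lra. }
    assert (Hhr : Cr * h ^ r = lam / 15 ^ r).
    { unfold h. rewrite pow_inv, Rpow_mult_distr, HPr.
      field. split; [apply pow_nonzero|]; lra. }
    assert (lam / 15 ^ r < lam / 2)
      by (apply Rmult_lt_compat_l; [lra|apply Rinv_lt_contravar; lra]).
    specialize (Hwin h Hh ltac:(lra)).
    assert (Hm : INR m <= 15 * P * ((INR r + 1) * L) + INR r).
    { apply (Rmult_le_compat_r (15 * P)) in Hwin; [|lra].
      unfold h in Hwin. field_simplify in Hwin; lra. }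
    replace (L * rpow Cr (/ INR r) * rpow lam (- / INR r)) with (L * P) by (unfold P; ring).
    assert (15 * P * ((INR r + 1) * L) <= 30 * INR r * (L * P))
      by (replace (15 * P * ((INR r + 1) * L)) with (15 * (L * P) * (INR r + 1)) by ring;
          assert (0 <= L * P) by nra; nra).
    lra.
Qed.

Section Runs.
Local Open Scope nat_scope.
Variable v : nat -> Prop.

Definition maximal_run (N s e : nat) : Prop :=
  s <= e < N /\ (forall k, s <= k <= e -> v k) /\
  (s = 0 \/ ~ v (s - 1)) /\ (S e = N \/ ~ v (S e)).

Definition run_decomposition (N m : nat) (st en : nat -> nat) : Prop :=
  (forall i, i < m -> maximal_run N (st i) (en i)) /\
  (forall i, S i < m -> S (en i) < st (S i)) /\
  (forall k, k < N -> v k -> exists i, i < m /\ st i <= k <= en i).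

Lemma runs_ordered (N m : nat) (st en : nat -> nat) :
  run_decomposition N m st en -> forall i j, i < j < m -> S (en i) < st j.
Proof.
  intros [Hrun [Hnext _]] i j. induction j as [|j IH]; intros Hij; [lia|].
  destruct (Nat.eq_dec i j) as [->|Hne]; [apply Hnext; lia|].
  specialize (IH ltac:(lia)). destruct (Hrun j ltac:(lia)) as [Hj _].
  specialize (Hnext j ltac:(lia)). lia.
Qed.

Lemma runs_before_last (N m : nat) (st en : nat -> nat) :
  run_decomposition N m st en -> forall i, i < m - 1 -> S (en i) < en (m - 1).
Proof.
  intros Hdec i Hi. pose proof (runs_ordered N m st en Hdec i (m - 1) ltac:(lia)).
  destruct Hdec as [Hrun _]. destruct (Hrun (m - 1) ltac:(lia)) as [Hlast _]. lia.
Qed.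

Lemma runs_skip (N m : nat) (st en : nat -> nat) :
  run_decomposition N m st en -> ~ v N -> run_decomposition (S N) m st en.
Proof.
  intros [Hrun [Hnext Hcov]] HvN. split; [|split; auto].
  - intros i Hi. destruct (Hrun i Hi) as [Hse [Hin [Hl Hr]]].
    repeat split; auto; try lia. destruct Hr as [Hr|Hr]; right; auto. rewrite Hr. auto.
  - intros k Hk Hv. destruct (Nat.eq_dec k N) as [->|]; [contradiction|]. apply Hcov; auto. lia.
Qed.

Lemma runs_extend (N m : nat) (st en : nat -> nat) :
  run_decomposition N m st en -> v N -> 0 < m -> S (en (m - 1)) = N ->
  run_decomposition (S N) m st (fun i => if Nat.eqb i (m - 1) then N else en i).
Proof.
  intros Hdec HvN Hm Hlast.
  pose proof (runs_before_last N m st en Hdec) as Hbefore.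
  destruct Hdec as [Hrun [Hnext Hcov]]. split; [|split].
  - intros i Hi. destruct (Nat.eqb_spec i (m - 1)) as [->|Hne].
    + destruct (Hrun (m - 1) ltac:(lia)) as [Hse [Hin [Hl _]]]. repeat split; auto; try lia.
      intros k Hk. destruct (Nat.eq_dec k N) as [->|]; auto. apply Hin. lia.
    + destruct (Hrun i Hi) as [Hse [Hin [Hl Hr]]]. specialize (Hbefore i ltac:(lia)).
      repeat split; auto; try lia. destruct Hr as [Hr|Hr]; [lia|auto].
  - intros i Hi. destruct (Nat.eqb_spec i (m - 1)); [lia|]. apply Hnext; lia.
  - intros k Hk Hv. destruct (Nat.eq_dec k N) as [->|].
    + exists (m - 1). rewrite Nat.eqb_refl. destruct (Hrun (m - 1) ltac:(lia)). lia.
    + destruct (Hcov k ltac:(lia) Hv) as [i [Hi Hik]]. exists i. split; auto.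
      destruct (Nat.eqb_spec i (m - 1)); lia.
Qed.

Lemma runs_append (N m : nat) (st en : nat -> nat) :
  run_decomposition N m st en -> v N -> ~ (0 < m /\ S (en (m - 1)) = N) ->
  run_decomposition (S N) (S m) (fun i => if Nat.eqb i m then N else st i)
                                (fun i => if Nat.eqb i m then N else en i).
Proof.
  intros Hdec HvN Hnew.
  pose proof (runs_before_last N m st en Hdec) as Hbefore.
  destruct Hdec as [Hrun [Hnext Hcov]].
  assert (Hgap : forall i, i < m -> S (en i) < N).
  { intros i Hi. assert (Hlast : S (en (m - 1)) <> N) by (intro; apply Hnew; split; lia).
    destruct (Hrun i Hi) as [Hse _], (Hrun (m - 1) ltac:(lia)) as [Hse' _].
    destruct (Nat.eq_dec i (m - 1)) as [->|]; [lia|].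
    specialize (Hbefore i ltac:(lia)). lia. }
  split; [|split].
  - intros i Hi. destruct (Nat.eqb_spec i m) as [->|Hne].
    + repeat split; try lia.
      * intros k Hk. replace k with N by lia. auto.
      * destruct N as [|N]; [left; auto|right]. cbn. rewrite Nat.sub_0_r. intros HvN'.
        destruct (Hcov N ltac:(lia) HvN') as [j [Hj Hjk]]. specialize (Hgap j Hj). lia.
    + destruct (Hrun i ltac:(lia)) as [Hse [Hin [Hl Hr]]]. specialize (Hgap i ltac:(lia)).
      repeat split; auto; try lia. destruct Hr as [Hr|Hr]; [lia|auto].
  - intros i Hi. destruct (Nat.eqb_spec i m); [lia|].
    destruct (Nat.eqb_spec (S i) m); [specialize (Hgap i ltac:(lia)); lia|]. apply Hnext; lia.
  - intros k Hk Hv. destruct (Nat.eq_dec k N) as [->|].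
    + exists m. rewrite Nat.eqb_refl. lia.
    + destruct (Hcov k ltac:(lia) Hv) as [i [Hi Hik]]. exists i. split; [lia|].
      destruct (Nat.eqb_spec i m); lia.
Qed.

Lemma runs_exist (N : nat) : exists m st en, run_decomposition N m st en.
Proof.
  induction N as [|N [m [st [en Hdec]]]].
  - exists 0, (fun _ => 0), (fun _ => 0). repeat split; intros; lia.
  - destruct (classic (v N)) as [HvN|HvN].
    + destruct (classic (0 < m /\ S (en (m - 1)) = N)) as [[Hm Hlast]|Hnew].
      * eexists _, _, _. exact (runs_extend N m st en Hdec HvN Hm Hlast).
      * eexists _, _, _. exact (runs_append N m st en Hdec HvN Hnew).
    + exists m, st, en. apply runs_skip; auto.
Qed.

End Runs.

Lemma rel_interval_bounds (a b l u t : R) (cl cr : bool) :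
  rel_interval a b l u cl cr t -> l <= t <= u.
Proof. intros [_ [[Hl|[_ Hl]] [Hu|[_ Hu]]]]; lra. Qed.

Lemma supnorm_bound (a b s : R) (f : R -> R) :
  a <= b -> is_supnorm a b f s -> (forall x, a <= x <= b -> Rabs (f x) <= s) /\ 0 <= s.
Proof.
  intros Hab [Hub _].
  assert (Hle : forall x, a <= x <= b -> Rabs (f x) <= s) by (intros x Hx; apply Hub; eauto).
  split; auto. pose proof (Hle a ltac:(lra)). pose proof (Rabs_pos (f a)). lra.
Qed.

Section Covering.
Variables (a b C lam : R) (g : R -> R) (N : nat).
Hypothesis Hab : a < b.
Hypothesis HC : 0 < C.
Hypothesis Hlam : 0 < lam.
Hypothesis HN : (1 <= N)%nat.
Hypothesis Hfine : (b - a) / INR N <= lam.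
Hypothesis Hlip : forall x y, a <= x <= b -> a <= y <= b -> Rabs (g x - g y) <= Rabs (x - y).

Definition node (k : nat) : R := a + INR k * ((b - a) / INR N).

Lemma mesh_pos : 0 < (b - a) / INR N.
Proof. apply Rdiv_lt_0_compat; [lra|apply lt_0_INR; lia]. Qed.

Lemma node_0 : node 0 = a.
Proof. unfold node. cbn. ring. Qed.

Lemma node_N : node N = b.
Proof. unfold node. field. apply not_0_INR. lia. Qed.

Lemma node_S (k : nat) : node (S k) = node k + (b - a) / INR N.
Proof. unfold node. rewrite S_INR. ring. Qed.

Lemma node_le (k k' : nat) : (k <= k')%nat -> node k <= node k'.
Proof.
  intros Hk. unfold node. apply le_INR in Hk. pose proof mesh_pos.
  apply Rplus_le_compat_l, Rmult_le_compat_r; lra.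
Qed.

Lemma node_lt (k k' : nat) : (k < k')%nat -> node k < node k'.
Proof.
  intros Hk. unfold node. apply lt_INR in Hk. pose proof mesh_pos.
  apply Rplus_lt_compat_l, Rmult_lt_compat_r; lra.
Qed.

Lemma node_in (k : nat) : (k <= N)%nat -> a <= node k <= b.
Proof.
  intros Hk. rewrite <- node_0, <- node_N. split; apply node_le; lia.
Qed.

Lemma find_cell (s e : nat) (t : R) : (s <= e)%nat -> node s <= t <= node (S e) ->
  exists k, (s <= k <= e)%nat /\ node k <= t <= node (S k).
Proof.
  induction e as [|e IH]; intros Hse Ht.
  - exists 0%nat. replace s with 0%nat in * by lia. split; [lia|auto].
  - destruct (Nat.eq_dec s (S e)) as [->|Hne]; [exists (S e); split; [lia|auto]|].
    destruct (Rle_dec t (node (S e))) as [Hle|Hgt].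
    + destruct (IH ltac:(lia) ltac:(lra)) as [k [Hk Hkt]]. exists k. split; [lia|auto].
    + exists (S e). split; [lia|lra].
Qed.

Definition low_cell (k : nat) : Prop := exists x, node k <= x <= node (S k) /\ Rabs (g x) < lam.

Definition safe_cell (k : nat) : Prop :=
  forall x, node k <= x <= node (S k) -> Rabs (g x) < (2 + C) * lam.

Definition linked_cell (k : nat) : Prop :=
  exists j, (j < N)%nat /\ low_cell j /\
    forall q, ((j <= q <= k)%nat \/ (k <= q <= j)%nat) -> safe_cell q.

Lemma near_low_point (x y : R) : a <= x <= b -> a <= y <= b ->
  Rabs (g x) < lam -> Rabs (y - x) < (1 + C) * lam -> Rabs (g y) < (2 + C) * lam.
Proof.
  intros Hx Hy Hgx Hyx. pose proof (Hlip y x Hy Hx).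
  pose proof (Rabs_triang (g x) (g y - g x)). replace (g x + (g y - g x)) with (g y) in * by ring.
  lra.
Qed.

Lemma low_safe (k : nat) : (k < N)%nat -> low_cell k -> safe_cell k.
Proof.
  intros Hk [x0 [Hx0 Hg0]] x Hx.
  pose proof (node_in k ltac:(lia)). pose proof (node_in (S k) ltac:(lia)).
  pose proof (node_S k). pose proof (Rmult_lt_0_compat C lam HC Hlam).
  apply (near_low_point x0); try lra.
  unfold Rabs; destruct Rcase_abs; lra.
Qed.

Lemma low_linked (k : nat) : (k < N)%nat -> low_cell k -> linked_cell k.
Proof.
  intros Hk Hlow. exists k. repeat split; auto.
  intros q Hq. replace q with k by lia. apply low_safe; auto.
Qed.

Lemma linked_safe (k : nat) : linked_cell k -> safe_cell k.
Proof. intros [j [_ [_ Hsafe]]]. apply Hsafe. lia. Qed.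

(* From now on st i, en i (i < m) are the maximal runs of linked cells; run i
   gives the interval from node (st i) to node (S (en i)), closed at a or b
   exactly when it reaches that endpoint. *)
Variables (m : nat) (st en : nat -> nat).
Hypothesis Hdec : run_decomposition linked_cell N m st en.

Lemma run_safe (i q : nat) : (i < m)%nat -> (st i <= q <= en i)%nat -> safe_cell q.
Proof.
  intros Hi Hq. destruct Hdec as [Hrun _]. apply linked_safe, (Hrun i Hi). auto.
Qed.

(* The low cell that links the first cell of a run belongs to the run. *)
Lemma run_has_low_cell (i : nat) : (i < m)%nat ->
  exists j, (st i <= j <= en i)%nat /\ low_cell j.
Proof.
  intros Hi. destruct Hdec as [Hrun _].
  destruct (Hrun i Hi) as [Hse [Hlinked [Hleft Hright]]].
  destruct (Hlinked (st i) ltac:(lia)) as [j [Hj [Hlow Hsafe]]].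
  exists j. split; auto.
  destruct (Compare_dec.lt_dec j (st i)) as [Hlt|Hge].
  - exfalso. destruct Hleft as [Hleft|Hleft]; [lia|]. apply Hleft.
    exists j. repeat split; auto. intros q Hq. apply Hsafe. lia.
  - destruct (Compare_dec.le_dec j (en i)) as [|Hgt]; [lia|]. exfalso.
    destruct Hright as [Hright|Hright]; [lia|]. apply Hright.
    exists j. repeat split; auto. intros q Hq. apply Hsafe. lia.
Qed.

(* A run reaches at least C lam to the left of each of its low points
   (unless it starts at a): otherwise the cell before it would be safe,
   hence linked, contradicting maximality. *)
Lemma run_left_margin (i j : nat) (x : R) : (i < m)%nat -> (st i <= j <= en i)%nat ->
  node j <= x <= node (S j) -> Rabs (g x) < lam ->
  st i = 0%nat \/ node (st i) <= x - C * lam.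
Proof.
  intros Hi Hj Hx Hgx. destruct (Nat.eq_dec (st i) 0) as [|Hst]; [left; auto|right].
  destruct Hdec as [Hrun _]. destruct (Hrun i Hi) as [Hse [_ [Hleft _]]].
  destruct (Rle_dec (node (st i)) (x - C * lam)) as [|Hfar]; auto. exfalso.
  destruct Hleft as [Hleft|Hleft]; [lia|]. apply Hleft.
  exists j. split; [lia|split; [exists x; auto|]].
  intros q Hq. destruct (Nat.eq_dec q (st i - 1)) as [->|Hq'].
  - intros y Hy. replace (S (st i - 1)) with (st i) in Hy by lia.
    pose proof (node_S (st i - 1)). replace (S (st i - 1)) with (st i) in * by lia.
    pose proof (node_in (st i - 1) ltac:(lia)). pose proof (node_in (S j) ltac:(lia)).
    pose proof (node_le (st i) j ltac:(lia)).
    apply (near_low_point x); try lra. unfold Rabs; destruct Rcase_abs; lra.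
  - apply (run_safe i); lia.
Qed.

Lemma run_right_margin (i j : nat) (x : R) : (i < m)%nat -> (st i <= j <= en i)%nat ->
  node j <= x <= node (S j) -> Rabs (g x) < lam ->
  S (en i) = N \/ x + C * lam <= node (S (en i)).
Proof.
  intros Hi Hj Hx Hgx. destruct (Nat.eq_dec (S (en i)) N) as [|Hen]; [left; auto|right].
  destruct Hdec as [Hrun _]. destruct (Hrun i Hi) as [Hse [_ [_ Hright]]].
  destruct (Rle_dec (x + C * lam) (node (S (en i)))) as [|Hfar]; auto. exfalso.
  destruct Hright as [Hright|Hright]; [lia|]. apply Hright.
  exists j. split; [lia|split; [exists x; auto|]].
  intros q Hq. destruct (Nat.eq_dec q (S (en i))) as [->|Hq'].
  - intros y Hy. pose proof (node_S (S (en i))).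
    pose proof (node_in j ltac:(lia)). pose proof (node_in (S (S (en i))) ltac:(lia)).
    pose proof (node_le (S j) (S (en i)) ltac:(lia)).
    apply (near_low_point x); try lra. unfold Rabs; destruct Rcase_abs; lra.
  - apply (run_safe i); lia.
Qed.

Lemma run_rel_open (i : nat) : (i < m)%nat ->
  rel_open_ok a b (node (st i)) (node (S (en i))) (Nat.eqb (st i) 0) (Nat.eqb (S (en i)) N).
Proof.
  intros Hi. destruct Hdec as [Hrun _]. destruct (Hrun i Hi) as [Hse _].
  pose proof (node_in (st i) ltac:(lia)). pose proof (node_in (S (en i)) ltac:(lia)).
  pose proof (node_lt (st i) (S (en i)) ltac:(lia)).
  repeat split; try lra; intros E; apply Nat.eqb_eq in E; rewrite E;
    [apply node_0|apply node_N].
Qed.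

Lemma run_length (i : nat) : C * lam <= b - a -> (i < m)%nat ->
  C * lam <= node (S (en i)) - node (st i).
Proof.
  intros Hlong Hi. destruct (run_has_low_cell i Hi) as [j [Hj [x [Hx Hgx]]]].
  destruct Hdec as [Hrun _]. destruct (Hrun i Hi) as [Hse _].
  pose proof (node_in j ltac:(lia)). pose proof (node_in (S j) ltac:(lia)).
  pose proof (Rmult_lt_0_compat C lam HC Hlam).
  destruct (run_left_margin i j x Hi Hj Hx Hgx) as [Hl|Hl];
    destruct (run_right_margin i j x Hi Hj Hx Hgx) as [Hr|Hr];
    rewrite ?Hl, ?Hr, ?node_0, ?node_N; lra.
Qed.

Lemma runs_disjoint (i j : nat) (t : R) : (i < m)%nat -> (j < m)%nat -> i <> j ->
  rel_interval a b (node (st i)) (node (S (en i))) (Nat.eqb (st i) 0) (Nat.eqb (S (en i)) N) t ->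
  ~ rel_interval a b (node (st j)) (node (S (en j))) (Nat.eqb (st j) 0) (Nat.eqb (S (en j)) N) t.
Proof.
  intros Hi Hj Hij Hti Htj.
  apply rel_interval_bounds in Hti, Htj.
  pose proof (runs_ordered _ N m st en Hdec) as Hord.
  destruct (Nat.lt_total i j) as [Hlt|[Heq|Hgt]]; [|contradiction|].
  - pose proof (node_lt (S (en i)) (st j) (Hord i j ltac:(lia))). lra.
  - pose proof (node_lt (S (en j)) (st i) (Hord j i ltac:(lia))). lra.
Qed.

(* Points where |g| < lam are covered: their cell is low, hence lies in a run;
   at an interior endpoint of the run the neighbouring cell would be low too. *)
Lemma runs_cover (t : R) : a <= t <= b -> Rabs (g t) < lam ->
  exists i, (i < m)%nat /\
    rel_interval a b (node (st i)) (node (S (en i))) (Nat.eqb (st i) 0) (Nat.eqb (S (en i)) N) t.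
Proof.
  intros Ht Hgt. destruct Hdec as [Hrun [_ Hcov]].
  destruct (find_cell 0 (N - 1) t) as [k [Hk Htk]];
    [lia|replace (S (N - 1)) with N by lia; rewrite node_0, node_N; lra|].
  assert (Hlow : low_cell k) by (exists t; auto).
  destruct (Hcov k ltac:(lia) (low_linked k ltac:(lia) Hlow)) as [i [Hi Hik]].
  destruct (Hrun i Hi) as [Hse [_ [Hleft Hright]]].
  pose proof (node_le (st i) k ltac:(lia)). pose proof (node_le (S k) (S (en i)) ltac:(lia)).
  exists i. split; auto. split; auto. split.
  - destruct (Rlt_dec (node (st i)) t) as [|Hn]; [left; auto|right]. split; [|lra].
    apply Nat.eqb_eq. destruct (Nat.eq_dec (st i) 0) as [|Hst]; auto.
    destruct Hleft as [|Hleft]; [lia|]. exfalso. apply Hleft.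
    apply low_linked; [lia|]. exists t. replace (S (st i - 1)) with (st i) by lia.
    pose proof (node_le (st i - 1) (st i) ltac:(lia)). split; [lra|auto].
  - destruct (Rlt_dec t (node (S (en i)))) as [|Hn]; [left; auto|right]. split; [|lra].
    apply Nat.eqb_eq. destruct (Nat.eq_dec (S (en i)) N) as [|Hen]; auto.
    destruct Hright as [|Hright]; [lia|]. exfalso. apply Hright.
    apply low_linked; [lia|]. exists t.
    pose proof (node_le (S (en i)) (S (S (en i))) ltac:(lia)). split; [lra|auto].
Qed.

Lemma runs_below (i : nat) (t : R) : (i < m)%nat ->
  rel_interval a b (node (st i)) (node (S (en i))) (Nat.eqb (st i) 0) (Nat.eqb (S (en i)) N) t ->
  Rabs (g t) < (2 + C) * lam.
Proof.
  intros Hi Ht. apply rel_interval_bounds in Ht.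
  destruct Hdec as [Hrun _]. destruct (Hrun i Hi) as [Hse _].
  destruct (find_cell (st i) (en i) t) as [k [Hk Htk]]; [lia|auto|].
  apply (run_safe i k); auto.
Qed.

(* Between two consecutive runs, the cell right after the first one is not
   linked, hence not safe: it contains a point where |g| >= (2 + C) lam.
   With a low point chosen in each run, this gives a zigzag. *)
Lemma runs_zigzag : exists s t : nat -> R,
  (forall i, (i < m)%nat -> a <= s i <= b /\ Rabs (g (s i)) < lam) /\
  (forall i, (S i < m)%nat -> s i < t i < s (S i) /\ (2 + C) * lam <= Rabs (g (t i))).
Proof.
  assert (Hlow : forall i, exists y : nat * R, (i < m)%nat ->
            (st i <= fst y <= en i)%nat /\ node (fst y) <= snd y <= node (S (fst y)) /\
            Rabs (g (snd y)) < lam).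
  { intros i. destruct (Compare_dec.lt_dec i m) as [Hi|Hi].
    - destruct (run_has_low_cell i Hi) as [j [Hj [x [Hx Hgx]]]]. exists (j, x). auto.
    - exists (0%nat, 0). intros; lia. }
  apply functional_choice in Hlow as [low Hlow].
  assert (Hhigh : forall i, exists x, (S i < m)%nat ->
            node (S (en i)) <= x <= node (S (S (en i))) /\ (2 + C) * lam <= Rabs (g x)).
  { intros i. destruct (Compare_dec.lt_dec (S i) m) as [Hi|Hi]; [|exists 0; intros; lia].
    destruct Hdec as [Hrun [Hnext _]].
    destruct (Hrun i ltac:(lia)) as [_ [_ [_ [Hright|Hright]]]];
      [pose proof (Hnext i Hi); destruct (Hrun (S i) Hi); lia|].
    destruct (classic (safe_cell (S (en i)))) as [Hsafe|Hunsafe].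
    - exfalso. apply Hright. destruct (Hlow i ltac:(lia)) as [Hj [Hx Hgx]].
      exists (fst (low i)). split; [destruct (Hrun i ltac:(lia)) as [[]]; lia|].
      split; [exists (snd (low i)); auto|].
      intros q Hq. destruct (Nat.eq_dec q (S (en i))) as [->|]; auto.
      apply (run_safe i); lia.
    - unfold safe_cell in Hunsafe. apply not_all_ex_not in Hunsafe as [x Hx]. exists x. intros _.
      apply imply_to_and in Hx as [Hx Hgx]. split; [auto|lra]. }
  apply functional_choice in Hhigh as [high Hhigh].
  exists (fun i => snd (low i)), high. split.
  - intros i Hi. destruct (Hlow i Hi) as [Hj [Hx Hgx]].
    destruct Hdec as [Hrun _]. destruct (Hrun i Hi) as [Hse _].
    pose proof (node_in (fst (low i)) ltac:(lia)). pose proof (node_in (S (fst (low i))) ltac:(lia)).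
    split; [lra|auto].
  - intros i Hi. destruct (Hhigh i Hi) as [Ht Hgt].
    destruct (Hlow i ltac:(lia)) as [Hj [Hx Hgx]]. destruct (Hlow (S i) Hi) as [Hj' [Hx' Hgx']].
    destruct Hdec as [Hrun [Hnext _]]. pose proof (Hnext i Hi).
    pose proof (node_le (S (fst (low i))) (S (en i)) ltac:(lia)).
    pose proof (node_le (S (S (en i))) (fst (low (S i))) ltac:(lia)).
    pose proof (Rmult_lt_0_compat C lam HC Hlam).
    split; [split|auto].
    + destruct (Req_dec (snd (low i)) (high i)) as [E|]; [rewrite E in Hgx; lra|lra].
    + destruct (Req_dec (high i) (snd (low (S i)))) as [E|]; [rewrite E in Hgt; lra|lra].
Qed.

End Covering.

Lemma zigzag_estimate (a b Cr lam : R) (r m : nat) (g : R -> R) (D : nat -> R -> R)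
  (s t : nat -> R) :
  a < b -> (1 <= r)%nat -> Cr_on r a b g D -> is_supnorm a b (D r) Cr -> 0 < lam ->
  (forall i, (i < m)%nat -> a <= s i <= b /\ Rabs (g (s i)) < lam) ->
  (forall i, (S i < m)%nat -> s i < t i < s (S i) /\ 2 * lam <= Rabs (g (t i))) ->
  INR m <= 30 * INR r * (1 + (b - a) * rpow Cr (/ INR r) * rpow lam (- / INR r)).
Proof.
  intros Hab Hr HCr Hsup Hlam Hs Ht.
  destruct (supnorm_bound a b Cr (D r) ltac:(lra) Hsup) as [HDr HCr0].
  pose proof HCr as [Hg _].
  apply count_estimate; auto; try lra. intros h Hh Hhr.
  destruct m as [|m].
  { change (INR (0 - 1)) with 0. pose proof (pos_INR r). pose proof (pos_INR (S r)). nra. }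
  apply (zigzag_count a b Cr lam h r (S m) g D s t); auto; try lia.
  - intros i Hi. destruct (Hs i Hi) as [Hin Hlow]. rewrite Hg; auto.
  - intros i Hi. destruct (Ht i Hi) as [Horder Hhigh].
    pose proof (Hs i ltac:(lia)). pose proof (Hs (S i) Hi).
    rewrite Hg by lra. auto.
Qed.

Theorem mainTheorem5 (a b : R) (r : nat) (g : R -> R) (D : nat -> R -> R)
  (Cr gsup C : R) :
  a < b -> (1 <= r)%nat -> Cr_on r a b g D ->
  (forall t, a <= t <= b -> Rabs (D 1%nat t) <= 1) ->
  is_supnorm a b (D r) Cr ->
  is_supnorm a b g gsup ->
  0 < C ->
  forall lam : R, 0 < lam -> lam <= gsup -> C * lam <= b - a ->
  exists (n : nat) (l u : nat -> R) (cl cr : nat -> bool),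
    (forall i, (i < n)%nat ->
       rel_open_ok a b (l i) (u i) (cl i) (cr i) /\ C * lam <= u i - l i) /\
    (forall i j, (i < n)%nat -> (j < n)%nat -> i <> j -> forall t,
       rel_interval a b (l i) (u i) (cl i) (cr i) t ->
       ~ rel_interval a b (l j) (u j) (cl j) (cr j) t) /\
    INR n <= 30 * INR r *
      (1 + (b - a) * rpow Cr (/ INR r) * rpow lam (- / INR r)) /\
    (forall t, a <= t <= b -> Rabs (g t) < lam ->
       exists i, (i < n)%nat /\ rel_interval a b (l i) (u i) (cl i) (cr i) t) /\
    (forall i t, (i < n)%nat -> rel_interval a b (l i) (u i) (cl i) (cr i) t ->
       Rabs (g t) < (8 + C) * lam).
Proof.
  intros Hab Hr HCr HD1 HsupCr _ HC lam Hlam _ Hlong.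
  pose proof (Cr_lipschitz a b r g D Hr HCr HD1) as Hlip.
  destruct (INR_archimed lam (b - a) Hlam) as [N HN].
  assert (HN1 : (1 <= N)%nat) by (destruct N; [cbn in HN; lra|lia]).
  assert (Hfine : (b - a) / INR N <= lam).
  { apply Rle_div_l; [apply lt_0_INR; lia|lra]. }
  (* the intervals are the maximal runs of linked cells *)
  destruct (runs_exist (linked_cell a b C lam g N) N) as [m [st [en Hdec]]].
  exists m, (fun i => node a b N (st i)), (fun i => node a b N (S (en i))),
    (fun i => Nat.eqb (st i) 0), (fun i => Nat.eqb (S (en i)) N).
  split; [|split; [|split; [|split]]].
  - intros i Hi. split.
    + eapply (run_rel_open a b C lam g N); eauto.
    + eapply (run_length a b C lam g N); eauto.
  - intros i j Hi Hj Hij t. eapply (runs_disjoint a b C lam g N); eauto.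
  - destruct (runs_zigzag a b C lam g N Hab HC Hlam HN1 m st en Hdec) as [low [high [Hlow Hhigh]]].
    apply (zigzag_estimate a b Cr lam r m g D low high); auto.
    intros i Hi. destruct (Hhigh i Hi) as [Horder Hbig]. split; auto.
    pose proof (Rmult_lt_0_compat C lam HC Hlam). lra.
  - intros t Ht Hgt. apply (runs_cover a b C lam g N); auto.
  - intros i t Hi Hti.
    assert (Rabs (g t) < (2 + C) * lam) by (eapply (runs_below a b C lam g N); eauto).
    lra.
Qed.
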